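(* Let $G$ be a finitely generated group with $\nabla G>0$, and let $A,B$ be finitely generated subgroups of infinite proindex in $G$. Then there exist finite index subgroups $A_0\le A$ and $B_0\le B$ such that $\langle A_0\cup B_0\rangle$ has infinite index in $G$.
   Context: For a group $U$, $d(U)$ denotes the minimal cardinality of a generating set of $U$. The rank gradient of a finitely generated group $G$ is $\nabla G=\inf_U \frac{d(U)-1}{[G:U]}$, where $U$ ranges over all finite index subgroups of $G$. The proindex of a subgroup $H$ in $G$ is the supremum of the indices $[G:U]$ over finite index subgroups $U$ of $G$ containing $H$. *)

From Stdlib Require Import Reals List Arith.
Open Scope R_scope.

Record Group := {
  carrier :> Type;
  gmul : carrier -> carrier -> carrier;
  gone : carrier;
  ginv : carrier -> carrier;
  gmul_assoc : forall x y z, gmul x (gmul y z) = gmul (gmul x y) z;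
  gmul_1l : forall x, gmul gone x = x;
  gmul_Vl : forall x, gmul (ginv x) x = gone
}.

Section GroupDefs.
Variable G : Group.

Definition subset (A B : G -> Prop) : Prop := forall x, A x -> B x.

Definition is_subgroup (H : G -> Prop) : Prop :=
  H (gone G) /\
  (forall x y, H x -> H y -> H (gmul G x y)) /\
  (forall x, H x -> H (ginv G x)).

Definition generated (S : G -> Prop) : G -> Prop :=
  fun x => forall H, is_subgroup H -> subset S H -> H x.

(* U is generated by (a set of at most) n elements, given as a list of length n *)
Definition generated_by_n (U : G -> Prop) (n : nat) : Prop :=
  exists l : list G, length l = n /\
    forall x, U x <-> generated (fun y => In y l) x.

Definition finitely_generated (U : G -> Prop) : Prop :=
  exists n, generated_by_n U n.

Definition is_rank (U : G -> Prop) (n : nat) : Prop :=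
  generated_by_n U n /\ forall m, generated_by_n U m -> (n <= m)%nat.

(* [A : U] = k, for U a subgroup contained in A: a list of k left-coset
   representatives in A, covering A, pairwise in distinct cosets. *)
Definition rel_index (A U : G -> Prop) (k : nat) : Prop :=
  exists l : list G, length l = k /\
    (forall g, In g l -> A g) /\
    (forall x, A x -> exists g, In g l /\ U (gmul G (ginv G g) x)) /\
    (forall i j, (i < k)%nat -> (j < k)%nat ->
        U (gmul G (ginv G (nth i l (gone G))) (nth j l (gone G))) -> i = j).

Definition full : G -> Prop := fun _ => True.

Definition index (U : G -> Prop) (k : nat) : Prop := rel_index full U k.

Definition finite_index (U : G -> Prop) : Prop := exists k, index U k.

(* nabla G > 0 : the infimum of (d(U)-1)/[G:U] over finite index subgroups U
   is positive, i.e. this set of reals has a positive lower bound. *)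
Definition rank_gradient_pos : Prop :=
  exists eps : R, 0 < eps /\
    forall (U : G -> Prop) (k d : nat),
      is_subgroup U -> index U k -> is_rank U d ->
      eps <= (INR d - 1) / INR k.

(* infinite proindex: the indices [G:U] of finite index subgroups U
   containing H are unbounded (supremum is infinite). *)
Definition infinite_proindex (H : G -> Prop) : Prop :=
  forall N : nat, exists (U : G -> Prop) (k : nat),
    is_subgroup U /\ subset H U /\ index U k /\ (N <= k)%nat.

End GroupDefs.

Arguments subset {G}.
Arguments is_subgroup {G}.
Arguments generated {G}.
Arguments finitely_generated {G}.
Arguments rel_index {G}.
Arguments index {G}.
Arguments finite_index {G}.
Arguments full {G}.
Arguments infinite_proindex {G}.

From Stdlib Require Import Reals List Arith Lia Lra Classical ClassicalEpsilon.

(* Choose subgroups [UA ⊇ A] and [UB ⊇ B] of index at least K and put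
   [A0 = A ∩ UB], [B0 = B ∩ UA].  Then [V = <A0 ∪ B0>] lies in [UA ∩ UB] and
   meets A in A0, so [[G:V] >= [G:UA][A:A0] >= K [A:A0]], and likewise for B.
   Schreier's lemma bounds [d(A0) <= 1 + [A:A0] d(A)], hence
   [d(V) <= d(A0) + d(B0) <= (d(A) + d(B) + 2) [G:V] / K].  If V had finite
   index, the rank gradient bound [eps [G:V] <= d(V) - 1] would fail for K
   larger than [(d(A) + d(B) + 2) / eps]. *)

Open Scope nat_scope.

Lemma NoDup_list_prod (X Y : Type) (l : list X) (l' : list Y) :
  NoDup l -> NoDup l' -> NoDup (list_prod l l').
Proof.
  intros ndl ndl'. induction ndl as [|x l xl ndl IH]; simpl; [constructor|].
  apply NoDup_app; auto.
  - apply NoDup_map_NoDup_ForallPairs; auto. intros y y' _ _ e. congruence.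
  - intros p hp hp'. apply in_map_iff in hp as [y [<- _]].
    apply in_prod_iff in hp' as [hx _]. contradiction.
Qed.

Lemma exists_least_nat (P : nat -> Prop) n :
  P n -> exists d, P d /\ forall m, P m -> d <= m.
Proof.
  intros hn.
  destruct (dec_inh_nat_subset_has_unique_least_element P (fun k => classic (P k)))
    as [d [hd _]]; eauto.
Qed.

Section GroupTheory.
Variable G : Group.
Local Notation "x * y" := (gmul G x y).
Local Notation "x ^-1" := (ginv G x) (at level 2).
Local Notation one := (gone G).

Lemma mulgA x y z : x * (y * z) = x * y * z. Proof. exact (gmul_assoc G x y z). Qed.
Lemma mul1g x : one * x = x. Proof. exact (gmul_1l G x). Qed.
Lemma mulVg x : x^-1 * x = one. Proof. exact (gmul_Vl G x). Qed.

Lemma mulKg x y : x^-1 * (x * y) = y.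
Proof. rewrite mulgA, mulVg, mul1g; reflexivity. Qed.

Lemma mulgI x y z : x * y = x * z -> y = z.
Proof. intros e. rewrite <- (mulKg x y), <- (mulKg x z), e; reflexivity. Qed.

Lemma mulgV x : x * x^-1 = one.
Proof.
  assert (idem : (x * x^-1) * (x * x^-1) = x * x^-1).
  { rewrite <- mulgA, (mulgA (x^-1)), mulVg, mul1g; reflexivity. }
  rewrite <- (mulKg (x * x^-1) (x * x^-1)), idem, mulVg; reflexivity.
Qed.

Lemma mulg1 x : x * one = x.
Proof. rewrite <- (mulVg x), mulgA, mulgV, mul1g; reflexivity. Qed.

Lemma mulKVg x y : x * (x^-1 * y) = y.
Proof. rewrite mulgA, mulgV, mul1g; reflexivity. Qed.

Lemma invgK x : (x^-1)^-1 = x.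
Proof. apply (mulgI (x^-1)). rewrite mulgV, mulVg; reflexivity. Qed.

Lemma invMg x y : (x * y)^-1 = y^-1 * x^-1.
Proof.
  apply (mulgI (x * y)).
  rewrite mulgV, mulgA, <- (mulgA x y), mulgV, mulg1, mulgV; reflexivity.
Qed.

Section Subgroup.
Variable H : G -> Prop.
Hypothesis subH : is_subgroup H.

Lemma group1 : H one. Proof. apply subH. Qed.
Lemma groupM x y : H x -> H y -> H (x * y). Proof. apply subH. Qed.
Lemma groupV x : H x -> H (x^-1). Proof. apply subH. Qed.

Lemma groupVr x : H (x^-1) -> H x.
Proof. intros h. rewrite <- (invgK x). apply groupV, h. Qed.

Lemma groupVM x y : H x -> H y -> H (x^-1 * y).
Proof. intros hx hy. apply groupM; [apply groupV|]; assumption. Qed.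

Lemma coset_sym x y : H (x^-1 * y) -> H (y^-1 * x).
Proof. intros h. apply groupV in h. rewrite invMg, invgK in h. exact h. Qed.

Lemma coset_trans x y z : H (x^-1 * y) -> H (y^-1 * z) -> H (x^-1 * z).
Proof.
  intros hxy hyz. pose proof (groupM _ _ hxy hyz) as h.
  rewrite <- mulgA, mulKVg in h. exact h.
Qed.

End Subgroup.

Arguments group1 {H}.
Arguments groupM {H} subH {x y}.
Arguments groupV {H} subH {x}.
Arguments groupVr {H} subH {x}.
Arguments groupVM {H} subH {x y}.
Arguments coset_sym {H} subH {x y}.
Arguments coset_trans {H} subH {x} y {z}.

Lemma generated_subgroup (S : G -> Prop) : is_subgroup (generated S).
Proof.
  split; [|split].
  - intros K HK _. apply HK.
  - intros x y hx hy K HK SK. apply HK; [apply hx|apply hy]; assumption.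
  - intros x hx K HK SK. apply HK, hx; assumption.
Qed.

Lemma sub_generated (S : G -> Prop) x : S x -> generated S x.
Proof. intros hx K _ SK. apply SK, hx. Qed.

Lemma generated_min (S H : G -> Prop) :
  is_subgroup H -> subset S H -> subset (generated S) H.
Proof. intros HH SH x hx. apply hx; assumption. Qed.

Arguments generated_min {S H}.

Lemma subgroupI (A B : G -> Prop) :
  is_subgroup A -> is_subgroup B -> is_subgroup (fun x => A x /\ B x).
Proof.
  intros HA HB. split; [|split].
  - split; apply group1; assumption.
  - intros x y [] []; split; apply groupM; assumption.
  - intros x []; split; apply groupV; assumption.
Qed.

Lemma generated_by_n_join (A0 B0 : G -> Prop) p q :
  generated_by_n G A0 p -> generated_by_n G B0 q ->
  generated_by_n G (generated (fun x => A0 x \/ B0 x)) (p + q).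
Proof.
  intros [LA [<- eA]] [LB [<- eB]]. exists (LA ++ LB).
  split; [apply length_app|]. intros x. split; apply generated_min.
  - apply generated_subgroup.
  - intros y [hy|hy]; [apply eA in hy|apply eB in hy];
      refine (generated_min (generated_subgroup _) _ y hy);
      intros z hz; apply sub_generated, in_or_app; auto.
  - apply generated_subgroup.
  - intros y hy. apply sub_generated. apply in_app_or in hy as [hy|hy].
    + left. apply eA, sub_generated, hy.
    + right. apply eB, sub_generated, hy.
Qed.

Lemma rank_le (U : G -> Prop) n : generated_by_n G U n -> exists d, is_rank G U d /\ d <= n.
Proof.
  intros hn. destruct (exists_least_nat (generated_by_n G U) n hn) as [d [hd least]].
  exists d. split; [split|]; auto.
Qed.

Definition distinct_cosets (H : G -> Prop) (l : list G) : Prop :=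
  NoDup l /\ forall x y, In x l -> In y l -> H (x^-1 * y) -> x = y.

Definition transversal (A H : G -> Prop) (l : list G) : Prop :=
  (forall g, In g l -> A g) /\
  (forall x, A x -> exists g, In g l /\ H (g^-1 * x)) /\
  distinct_cosets H l.

Lemma rel_indexP (A H : G -> Prop) k : is_subgroup H ->
  rel_index A H k <-> exists l, length l = k /\ transversal A H l.
Proof.
  intros HH. split.
  - intros [l [<- [lA [cov dist]]]]. exists l. do 3 (split; auto). split.
    + apply (NoDup_nth l one). intros i j hi hj e.
      apply dist; auto. rewrite e, mulVg. apply group1, HH.
    + intros x y hx hy h.
      destruct (In_nth l x one hx) as [i [hi <-]].
      destruct (In_nth l y one hy) as [j [hj <-]].
      f_equal. apply dist; assumption.
  - intros [l [<- [lA [cov [nd dist]]]]]. exists l. do 3 (split; auto).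
    intros i j hi hj h. apply (proj1 (NoDup_nth l one) nd); auto.
    apply dist; auto; apply nth_In; assumption.
Qed.

Lemma rel_index_pos (A H : G -> Prop) k : A one -> rel_index A H k -> 0 < k.
Proof.
  intros A1 [l [<- [_ [cov _]]]]. destruct (cov one A1) as [g [hg _]].
  destruct l; [contradiction|simpl; lia].
Qed.

Lemma distinct_cosets_length_le (H : G -> Prop) xs gs : is_subgroup H ->
  distinct_cosets H xs -> (forall x, In x xs -> exists g, In g gs /\ H (g^-1 * x)) ->
  length xs <= length gs.
Proof.
  intros HH [nd dist] cov.
  set (f x := epsilon (inhabits one) (fun g => In g gs /\ H (g^-1 * x))).
  assert (hf : forall x, In x xs -> In (f x) gs /\ H ((f x)^-1 * x))
    by (intros x hx; apply epsilon_spec, cov, hx).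
  rewrite <- (length_map f xs). apply NoDup_incl_length.
  - apply NoDup_map_NoDup_ForallPairs; auto. intros x y hx hy e.
    destruct (hf x hx) as [_ hx']. destruct (hf y hy) as [_ hy'].
    rewrite e in hx'. apply dist; auto.
    apply (coset_trans HH (f y)); [apply coset_sym|]; assumption.
  - intros g hg. apply in_map_iff in hg as [x [<- hx]]. apply hf, hx.
Qed.

Lemma distinct_cosets_map (X : Type) (H : G -> Prop) (f : X -> G) (l : list X) :
  is_subgroup H -> NoDup l ->
  (forall p q, In p l -> In q l -> H ((f p)^-1 * f q) -> p = q) ->
  distinct_cosets H (map f l).
Proof.
  intros HH nd inj. split.
  - apply NoDup_map_NoDup_ForallPairs; auto. intros p q hp hq e.
    apply inj; auto. rewrite e, mulVg. apply group1, HH.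
  - intros x y hx hy h.
    apply in_map_iff in hx as [p [<- hp]]. apply in_map_iff in hy as [q [<- hq]].
    f_equal. apply inj; assumption.
Qed.

Lemma transversal_inter (A U : G -> Prop) ts :
  is_subgroup A -> is_subgroup U -> transversal full U ts ->
  exists l, transversal A (fun x => A x /\ U x) l.
Proof.
  intros HA HU [_ [cov [nd dist]]].
  set (meets t := exists a, A a /\ U (t^-1 * a)).
  set (rep t := epsilon (inhabits one) (fun a => A a /\ U (t^-1 * a))).
  assert (hrep : forall t, meets t -> A (rep t) /\ U (t^-1 * rep t))
    by (intros t ht; apply epsilon_spec, ht).
  set (ts' := filter (fun t => if excluded_middle_informative (meets t) then true else false) ts).
  assert (hts' : forall t, In t ts' <-> In t ts /\ meets t).
  { intros t. unfold ts'. rewrite filter_In.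
    destruct (excluded_middle_informative (meets t)); intuition congruence. }
  exists (map rep ts'). split; [|split].
  - intros a ha. apply in_map_iff in ha as [t [<- ht]]. apply hrep, hts', ht.
  - intros x hx. destruct (cov x I) as [t [ht hu]].
    assert (hm : meets t) by (exists x; auto).
    destruct (hrep t hm) as [repA repU].
    exists (rep t). split; [apply in_map, hts'; auto|split].
    + apply groupVM; assumption.
    + apply (coset_trans HU t); [apply coset_sym|]; assumption.
  - apply distinct_cosets_map; [apply subgroupI; assumption|apply NoDup_filter, nd|].
    intros t t' ht ht' [_ h].
    apply hts' in ht as [ht hm]. apply hts' in ht' as [ht' hm'].
    destruct (hrep t hm) as [_ h1]. destruct (hrep t' hm') as [_ h2].
    apply dist; auto.
    apply (coset_trans HU (rep t)); auto.
    apply (coset_trans HU (rep t')); [|apply coset_sym]; assumption.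
Qed.

Lemma rel_index_inter (A U : G -> Prop) k :
  is_subgroup A -> is_subgroup U -> index U k ->
  exists j, rel_index A (fun x => A x /\ U x) j.
Proof.
  intros HA HU hU. apply rel_indexP in hU as [ts [_ tU]]; auto.
  destruct (transversal_inter A U ts HA HU tU) as [l tl].
  exists (length l). apply rel_indexP; [apply subgroupI|exists l]; auto.
Qed.

Lemma invMg_mul t a t' a' : (t * a)^-1 * (t' * a') = a^-1 * (t^-1 * t') * a'.
Proof. rewrite invMg, !mulgA; reflexivity. Qed.

(* The products [t a] of representatives of [G/U] and of [A/A0] lie in
   distinct cosets of V. *)
Lemma index_mul_le (U A A0 V : G -> Prop) k j m :
  is_subgroup U -> is_subgroup A -> is_subgroup A0 -> is_subgroup V ->
  subset A U -> subset V U -> (forall x, A x -> V x -> A0 x) ->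
  index U k -> rel_index A A0 j -> index V m -> k * j <= m.
Proof.
  intros HU HA HA0 HV AU VU AVA0 hU hA hV.
  apply rel_indexP in hU as [ts [<- [_ [_ [ndt distt]]]]]; auto.
  apply rel_indexP in hA as [as_ [<- [asA [_ [nda dista]]]]]; auto.
  apply rel_indexP in hV as [gs [<- [_ [cov _]]]]; auto.
  rewrite <- length_prod, <- (length_map (fun p => fst p * snd p)).
  apply (distinct_cosets_length_le V); auto.
  2: { intros x _. apply cov. exact I. }
  apply distinct_cosets_map; [assumption|apply NoDup_list_prod; assumption|].
  intros [t a] [t' a'] hp hq h. simpl in h.
  apply in_prod_iff in hp as [ht ha]. apply in_prod_iff in hq as [ht' ha'].
  assert (ett : t = t').
  { apply distt; auto. apply VU in h. rewrite invMg_mul in h.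
    assert (e : t^-1 * t' = a * (a^-1 * (t^-1 * t') * a') * a'^-1)
      by (rewrite (mulgA a), <- (mulgA (a * _)), mulgV, mulg1, mulKVg; reflexivity).
    rewrite e. apply (groupM HU); [apply (groupM HU)|apply (groupV HU)]; auto. }
  subst t'. rewrite invMg_mul, mulVg, mulg1 in h.
  f_equal. apply dista; auto. apply AVA0; auto. apply groupVM; auto.
Qed.

Section Schreier.
Variables (A A0 : G -> Prop) (S reps : list G).
Hypotheses (HA : is_subgroup A) (HA0 : is_subgroup A0) (A0A : subset A0 A).
Hypothesis genA : forall x, A x <-> generated (fun y => In y S) x.
Hypothesis treps : transversal A A0 reps.

Definition coset_rep (x : G) : G :=
  epsilon (inhabits one) (fun c => In c reps /\ A0 (c^-1 * x)).

Lemma coset_repP x : A x -> In (coset_rep x) reps /\ A0 ((coset_rep x)^-1 * x).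
Proof. intros hx. unfold coset_rep. apply epsilon_spec. destruct treps as [_ [cov _]]. apply cov, hx. Qed.

Lemma coset_rep_eq x c : A x -> In c reps -> A0 (c^-1 * x) -> coset_rep x = c.
Proof.
  intros hx hc h. destruct (coset_repP x hx) as [h1 h2].
  destruct treps as [_ [_ [_ dist]]]. apply dist; auto.
  apply (coset_trans HA0 x); [|apply coset_sym]; assumption.
Qed.

Lemma reps_in x : In x reps -> A x.
Proof. apply treps. Qed.

Lemma gens_in s : In s S -> A s.
Proof. intros hs. apply genA, sub_generated, hs. Qed.

Definition schreier_gens : list G :=
  flat_map (fun c => map (fun s => (coset_rep (s * c))^-1 * (s * c)) S) reps.

Local Notation W := (generated (fun y => In y schreier_gens)).

Lemma schreier_gens_sub : subset W A0.
Proof.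
  apply generated_min; auto. intros y hy.
  apply in_flat_map in hy as [c [hc hy]]. apply in_map_iff in hy as [s [<- hs]].
  apply coset_repP. apply (groupM HA); [apply gens_in|apply reps_in]; assumption.
Qed.

Lemma coset_stepM a b x y c : a^-1 * (x * y * c) = (a^-1 * (x * b)) * (b^-1 * (y * c)).
Proof. rewrite !mulgA, <- (mulgA (a^-1 * x) b (b^-1)), mulgV, mulg1; reflexivity. Qed.

Lemma coset_stepV c x d : (c^-1 * (x * d))^-1 = d^-1 * (x^-1 * c).
Proof. rewrite !invMg, invgK, !mulgA; reflexivity. Qed.

(* Elements of A whose action on the cosets is realised inside [W]. *)
Definition schreier_stable (x : G) : Prop :=
  A x /\ forall c, In c reps -> W ((coset_rep (x * c))^-1 * (x * c)).

Lemma schreier_stable_subgroup : is_subgroup schreier_stable.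
Proof.
  assert (HW := generated_subgroup (fun y => In y schreier_gens)).
  split; [|split].
  - split; [apply group1; auto|]. intros c hc. rewrite mul1g.
    rewrite (coset_rep_eq c c); auto using reps_in;
      rewrite mulVg; apply group1; auto.
  - intros x y [hx wx] [hy wy]. split; [apply groupM; auto|]. intros c hc.
    assert (hyc : A (y * c)) by (apply groupM; auto using reps_in).
    set (c' := coset_rep (y * c)). destruct (coset_repP _ hyc) as [hc' _].
    assert (hxc : A (x * c')) by (apply groupM; auto using reps_in).
    set (c'' := coset_rep (x * c')). destruct (coset_repP _ hxc) as [hc'' _].
    assert (hw : W (c''^-1 * (x * y * c))).
    { rewrite (coset_stepM c'' c'). apply (groupM HW); [apply wx|apply wy]; assumption. }
    rewrite (coset_rep_eq (x * y * c) c''); auto using schreier_gens_sub.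
    apply (groupM HA); [apply (groupM HA)|apply reps_in]; auto.
  - intros x [hx wx]. split; [apply groupV; auto|]. intros c hc.
    assert (hxc : A (x^-1 * c)) by (apply groupVM; auto using reps_in).
    set (d := coset_rep (x^-1 * c)). destruct (coset_repP _ hxc) as [hd hd'].
    assert (e : coset_rep (x * d) = c).
    { apply coset_rep_eq; auto. { apply groupM; auto using reps_in. }
      apply (groupV HA0) in hd'. rewrite <- coset_stepV, invgK in hd'. exact hd'. }
    specialize (wx d hd). rewrite e in wx. apply (groupV HW) in wx.
    rewrite coset_stepV in wx. exact wx.
Qed.

Lemma schreier_stable_all : subset A schreier_stable.
Proof.
  intros x hx. refine (generated_min schreier_stable_subgroup _ x (proj1 (genA x) hx)).
  intros s hs. split; [apply gens_in; auto|]. intros c hc.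
  apply sub_generated, in_flat_map. exists c. split; auto.
  apply in_map_iff. exists s. auto.
Qed.

(* [coset_rep one] represents A0 itself; the Schreier generators generate
   its conjugate by it. *)
Lemma generated_schreier_gens x :
  A0 x <-> generated (fun y => In y (coset_rep one :: schreier_gens)) x.
Proof.
  set (e := coset_rep one).
  assert (He := generated_subgroup (fun y => In y (e :: schreier_gens))).
  destruct (coset_repP one (group1 HA)) as [he he'].
  rewrite mulg1 in he'. apply (groupVr HA0) in he'.
  split.
  - intros hx. destruct (schreier_stable_all x (A0A x hx)) as [_ wx].
    specialize (wx e he).
    rewrite (coset_rep_eq (x * e) e) in wx; auto using reps_in.
    2: { apply groupM; auto. }
    2: { apply groupVM; auto. apply groupM; auto. }
    assert (ex : x = e * (e^-1 * (x * e)) * e^-1)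
      by (rewrite mulKVg, <- mulgA, mulgV, mulg1; reflexivity).
    rewrite ex. apply (groupM He); [apply (groupM He)|apply (groupV He)].
    + apply sub_generated. left. reflexivity.
    + refine (generated_min He _ _ wx). intros y hy. apply sub_generated. right. exact hy.
    + apply sub_generated. left. reflexivity.
  - apply generated_min; auto. intros y [<-|hy]; auto. apply schreier_gens_sub, sub_generated, hy.
Qed.

End Schreier.

Lemma schreier_generated_by_n (A A0 : G -> Prop) n j :
  is_subgroup A -> is_subgroup A0 -> subset A0 A ->
  generated_by_n G A n -> rel_index A A0 j -> generated_by_n G A0 (1 + j * n).
Proof.
  intros HA HA0 A0A [S [<- genA]] hj.
  apply rel_indexP in hj as [reps [<- treps]]; auto.
  exists (coset_rep A0 reps one :: schreier_gens A0 S reps). split.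
  - simpl. f_equal. unfold schreier_gens.
    rewrite (flat_map_constant_length (c := length S)); auto.
    intros; apply length_map.
  - intros x. apply (generated_schreier_gens A A0 S reps); assumption.
Qed.

End GroupTheory.

Lemma rank_gradient_absurd (eps : R) (K m d c : nat) :
  (0 < eps)%R -> (INR c / eps < INR K)%R -> K <= m -> K * d <= m * c ->
  ~ (eps <= (INR d - 1) / INR m)%R.
Proof.
  intros heps hK hKm hd hgrad.
  assert (hcK : (INR c < INR K * eps)%R).
  { apply (Rmult_lt_compat_r eps) in hK; auto.
    unfold Rdiv in hK. rewrite Rmult_assoc, Rinv_l, Rmult_1_r in hK; lra. }
  assert (hK0 : (0 < INR K)%R) by (pose proof (pos_INR c); nra).
  assert (hm0 : (0 < INR m)%R) by (apply le_INR in hKm; lra).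
  apply (Rmult_le_compat_r (INR m)) in hgrad; [|lra].
  unfold Rdiv in hgrad. rewrite Rmult_assoc, Rinv_l, Rmult_1_r in hgrad; [|lra].
  apply le_INR in hd. rewrite !mult_INR in hd.
  nra.
Qed.

Theorem lemma3p1 (G : Group) (A B : G -> Prop) :
  finitely_generated (@full G) ->
  rank_gradient_pos G ->
  is_subgroup A -> finitely_generated A -> infinite_proindex A ->
  is_subgroup B -> finitely_generated B -> infinite_proindex B ->
  exists A0 B0 : G -> Prop,
    is_subgroup A0 /\ subset A0 A /\ (exists k, rel_index A A0 k) /\
    is_subgroup B0 /\ subset B0 B /\ (exists k, rel_index B B0 k) /\
    ~ finite_index (generated (fun x => A0 x \/ B0 x)).
Proof.
  intros _ [eps [heps grad]] HA [dA genA] proA HB [dB genB] proB.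
  destruct (INR_unbounded (INR (dA + dB + 2) / eps)) as [K hK].
  destruct (proA K) as [UA [kA [HUA [AUA [iUA hkA]]]]].
  destruct (proB K) as [UB [kB [HUB [BUB [iUB hkB]]]]].
  set (A0 := fun x => A x /\ UB x). set (B0 := fun x => B x /\ UA x).
  assert (HA0 : is_subgroup A0) by (apply subgroupI; auto).
  assert (HB0 : is_subgroup B0) by (apply subgroupI; auto).
  destruct (rel_index_inter G A UB kB HA HUB iUB) as [jA iA0].
  destruct (rel_index_inter G B UA kA HB HUA iUA) as [jB iB0].
  exists A0, B0.
  split; [exact HA0|split; [exact (fun x h => proj1 h)|split; [exists jA; exact iA0|]]].
  split; [exact HB0|split; [exact (fun x h => proj1 h)|split; [exists jB; exact iB0|]]].
  intros [m iV]. set (V := generated (fun x => A0 x \/ B0 x)) in iV.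
  assert (HV : is_subgroup V) by apply generated_subgroup.
  assert (VUA : subset V UA) by (apply generated_min; auto; intros x [[] | []]; auto).
  assert (VUB : subset V UB) by (apply generated_min; auto; intros x [[] | []]; auto).
  assert (mA : kA * jA <= m)
    by (apply (index_mul_le G UA A A0 V); auto; intros x hx hv; split; auto).
  assert (mB : kB * jB <= m)
    by (apply (index_mul_le G UB B B0 V); auto; intros x hx hv; split; auto).
  assert (jA0 : 0 < jA) by (apply (rel_index_pos G A A0); [apply HA|exact iA0]).
  assert (jB0 : 0 < jB) by (apply (rel_index_pos G B B0); [apply HB|exact iB0]).
  destruct (rank_le G V _ (generated_by_n_join G A0 B0 _ _
      (schreier_generated_by_n G A A0 _ _ HA HA0 (fun x h => proj1 h) genA iA0)
      (schreier_generated_by_n G B B0 _ _ HB HB0 (fun x h => proj1 h) genB iB0)))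
    as [d [rankV hd]].
  apply (rank_gradient_absurd eps K m d (dA + dB + 2)); auto; [nia|nia|].
  apply (grad V m d); assumption.
Qed.
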